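(* Let $w\in W_+$ and let $\ell\in\{1,\dots,m\}$ be such that $w\theta_\ell\neq\theta$. Then $\theta\notin wR_\ell$.
   Context: $R$ is an irreducible reduced root system in $V=\mathbb C^n$ with Weyl group $W$, positive roots $R_+$, simple roots $\Delta=\{\alpha_1,\dots,\alpha_n\}$ and maximal root $\theta$ (with respect to $\Delta$). Fix $S_0\subset\Delta$, $W_+=\{w\in W:wS_0\subset R_+\}$, $V_0=\mathrm{span}(S_0)$, and let $R_0=V_0\cap R$ (a root system with simple roots $S_0$) decompose into irreducible components $R_0=\bigsqcup_{\ell=1}^m R_\ell$; $S_\ell=S_0\cap R_\ell$ and $\theta_\ell$ is the maximal root of $R_\ell$ with respect to $S_\ell$. *)

(* Root systems à la Bourbaki, over a numeric closed field F
   (the paper's C is the model case). Vectors of V = F^n are row vectors. *)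
From HB Require Import structures.
From mathcomp Require Import all_boot all_order all_algebra.
Set Implicit Arguments. Unset Strict Implicit. Unset Printing Implicit Defensive.
Import Order.TTheory GRing.Theory Num.Theory.
Local Open Scope ring_scope.

Section RootSystems.
Variables (F : numClosedFieldType) (n : nat).
Local Notation vec := 'rV[F]_n.

(* the natural pairing V x V^* -> F, with V^* identified with row vectors *)
Definition pairing (x y : vec) : F := (x *m y^T) 0 0.

Definition span_mx (s : seq vec) : 'M[F]_(size s, n) := \matrix_(i < size s) nth 0 s i.

(* reflection s_a : x |-> x - <x, a^v> a, acting on rows by right multiplication *)
Definition refl_mx (cor : vec -> vec) (a : vec) : 'M[F]_n :=
  1%:M - (cor a)^T *m a.

Definition is_root_system (R : seq vec) (cor : vec -> vec) : Prop :=
  [/\ uniq R, (0 : vec) \notin R, row_full (span_mx R) &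
      forall a, a \in R ->
        [/\ pairing a (cor a) = 2,
            forall b, b \in R -> b *m refl_mx cor a \in R &
            forall b, b \in R -> exists z : int, pairing b (cor a) = z%:~R]].

Definition reduced (R : seq vec) : Prop :=
  forall a c, a \in R -> c *: a \in R -> c = 1 \/ c = -1.

Definition direct_parts (X : seq vec) (P : pred vec) : Prop :=
  \rank (span_mx (filter P X) :&: span_mx (filter (predC P) X))%MS = 0%N.

(* irreducible (Bourbaki): nonempty, and V is not a nontrivial direct sum
   V1 + V2 with X contained in V1 \cup V2 *)
Definition irreducible (X : seq vec) : Prop :=
  X != [::] /\
  forall P : pred vec, has P X -> has (predC P) X -> ~ direct_parts X P.

Definition irr_component (X C : seq vec) : Prop :=
  exists P : pred vec, [/\ C = filter P X, direct_parts X P & irreducible C].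

Inductive weyl (R : seq vec) (cor : vec -> vec) : 'M[F]_n -> Prop :=
| weyl_one : weyl R cor 1%:M
| weyl_refl a w : a \in R -> weyl R cor w -> weyl R cor (refl_mx cor a *m w).

Definition nonneg_comb (D : 'I_n -> vec) (J : {set 'I_n}) (x : vec) : Prop :=
  exists k : 'I_n -> nat,
    (forall i, i \notin J -> k i = 0%N) /\ x = \sum_i (k i)%:R *: D i.

Definition is_base (R : seq vec) (D : 'I_n -> vec) : Prop :=
  [/\ forall i, D i \in R, row_free (\matrix_i D i) &
      forall b, b \in R -> nonneg_comb D setT b \/ nonneg_comb D setT (- b)].

Definition positive_root (R : seq vec) (D : 'I_n -> vec) (b : vec) : Prop :=
  b \in R /\ nonneg_comb D setT b.

Definition maximal_root (D : 'I_n -> vec) (J : {set 'I_n}) (X : seq vec)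
  (theta : vec) : Prop :=
  theta \in X /\ forall b, b \in X -> nonneg_comb D J (theta - b).

Definition V0_mx (D : 'I_n -> vec) (I : {set 'I_n}) : 'M[F]_n :=
  \matrix_i (if i \in I then D i else 0).

Definition R0 (R : seq vec) (D : 'I_n -> vec) (I : {set 'I_n}) : seq vec :=
  [seq b <- R | (b <= V0_mx D I)%MS].

Definition S_of (D : 'I_n -> vec) (I : {set 'I_n}) (C : seq vec) : {set 'I_n} :=
  [set i in I | D i \in C].

Definition W_plus (R : seq vec) (cor : vec -> vec) (D : 'I_n -> vec)
  (I : {set 'I_n}) (w : 'M[F]_n) : Prop :=
  weyl R cor w /\ forall i, i \in I -> positive_root R D (D i *m w).

End RootSystems.

From HB Require Import structures.
From mathcomp Require Import all_boot all_order all_algebra.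
Set Implicit Arguments. Unset Strict Implicit. Unset Printing Implicit Defensive.
Import Order.TTheory GRing.Theory Num.Theory.
Local Open Scope ring_scope.

(* Order the vectors by  x >= y  iff  x - y  is a nonnegative
   integral combination of the simple roots; since the simple roots are
   linearly independent this relation is antisymmetric.  Suppose theta = b w
   with b in R_l.  Maximality of theta_l in R_l gives  theta_l - b  as a
   nonnegative combination of S_l; as w maps every root of S_0 (hence of S_l)
   to a positive root, the image  theta_l w - theta = (theta_l - b) w  is
   nonnegative.  Conversely theta_l w is a root (W stabilises R), so the
   maximality of theta in R gives  theta - theta_l w >= 0.  By antisymmetry
   theta_l w = theta, contradicting the hypothesis. *)

Section NonnegCombinations.
Variables (F : numClosedFieldType) (n : nat) (D : 'I_n -> 'rV[F]_n).

Lemma nonneg_comb0 (J : {set 'I_n}) : nonneg_comb D J 0.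
Proof.
by exists (fun=> 0%N); split=> //; rewrite big1 // => i _; rewrite scale0r.
Qed.

Lemma nonneg_combD (J : {set 'I_n}) x y :
  nonneg_comb D J x -> nonneg_comb D J y -> nonneg_comb D J (x + y).
Proof.
move=> [k1 [k1J ->]] [k2 [k2J ->]]; exists (fun i => (k1 i + k2 i)%N); split.
  by move=> i iJ; rewrite k1J ?k2J.
by rewrite -big_split; apply: eq_bigr => i _; rewrite natrD scalerDl.
Qed.

Lemma nonneg_combMn (J : {set 'I_n}) (c : nat) x :
  nonneg_comb D J x -> nonneg_comb D J (c%:R *: x).
Proof.
move=> [k [kJ ->]]; exists (fun i => (c * k i)%N); split.
  by move=> i iJ; rewrite kJ ?muln0.
by rewrite scaler_sumr; apply: eq_bigr => i _; rewrite natrM scalerA.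
Qed.

Lemma nonneg_comb_map (J : {set 'I_n}) (w : 'M[F]_n) x :
  (forall i, i \in J -> nonneg_comb D setT (D i *m w)) ->
  nonneg_comb D J x -> nonneg_comb D setT (x *m w).
Proof.
move=> DwJ [k [kJ ->]]; rewrite mulmx_suml.
apply: (big_ind (nonneg_comb D setT)) => [|y z|i _].
- exact: nonneg_comb0.
- exact: nonneg_combD.
rewrite -scalemxAl; have [iJ|iNJ] := boolP (i \in J).
  exact/nonneg_combMn/DwJ.
by rewrite kJ // scale0r; apply: nonneg_comb0.
Qed.

Lemma nonneg_comb_antisym x :
  row_free (\matrix_i D i) ->
  nonneg_comb D setT x -> nonneg_comb D setT (- x) -> x = 0.
Proof.
move=> Dfree [k1 [_ Ex]] [k2 [_ ENx]].
have coef0 : (\row_i ((k1 i + k2 i)%N%:R : F)) *m (\matrix_i D i) = 0.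
  rewrite mulmx_sum_row -[RHS](subrr x) [in X in _ = X + _]Ex ENx -big_split /=.
  by apply: eq_bigr => i _; rewrite mxE rowK natrD scalerDl.
move/eqP: coef0; rewrite mulmx_free_eq0 // => /eqP coef0.
rewrite Ex big1 // => i _.
have /eqP := congr1 (fun M : 'rV[F]_n => M 0 i) coef0; rewrite !mxE.
by rewrite pnatr_eq0 addn_eq0 => /andP [/eqP -> _]; rewrite scale0r.
Qed.

End NonnegCombinations.

Lemma weyl_stable (F : numClosedFieldType) (n : nat) (R : seq 'rV[F]_n)
  (cor : 'rV[F]_n -> 'rV[F]_n) (w : 'M[F]_n) b :
  is_root_system R cor -> weyl R cor w -> b \in R -> b *m w \in R.
Proof.
move=> [_ _ _ reflR] Ww; elim: Ww b => [|a w' aR _ IHw] b bR.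
  by rewrite mulmx1.
by rewrite mulmxA; apply: IHw; have [_ sR _] := reflR a aR; apply: sR.
Qed.

Lemma irr_component_sub (F : numClosedFieldType) (n : nat) (R : seq 'rV[F]_n)
  (D : 'I_n -> 'rV[F]_n) (I : {set 'I_n}) (Rl : seq 'rV[F]_n) :
  irr_component (R0 R D I) Rl -> {subset Rl <= R}.
Proof.
by move=> [P [-> _ _]] b; rewrite mem_filter mem_filter => /andP [_ /andP [_]].
Qed.

Theorem mainTheorem4 (F : numClosedFieldType) (n : nat)
  (R : seq 'rV[F]_n) (cor : 'rV[F]_n -> 'rV[F]_n) (D : 'I_n -> 'rV[F]_n)
  (theta : 'rV[F]_n) (I : {set 'I_n}) (Rl : seq 'rV[F]_n) (theta_l : 'rV[F]_n)
  (w : 'M[F]_n) :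
  is_root_system R cor -> reduced R -> irreducible R ->
  is_base R D -> maximal_root D setT R theta ->
  irr_component (R0 R D I) Rl ->
  maximal_root D (S_of D I Rl) Rl theta_l ->
  W_plus R cor D I w ->
  theta_l *m w != theta ->
  theta \notin [seq b *m w | b <- Rl].
Proof.
move=> RS _ _ [_ Dfree _] [_ theta_max] RlC [thetal_Rl thetal_max] [Ww wpos].
move=> thetal_w; apply/mapP => -[b bRl theta_bw].
have Sl_pos i : i \in S_of D I Rl -> nonneg_comb D setT (D i *m w).
  by rewrite inE => /andP [iI _]; have [] := wpos i iI.
have above : nonneg_comb D setT (theta_l *m w - theta).
  by rewrite theta_bw -mulmxBl; apply: nonneg_comb_map Sl_pos (thetal_max b bRl).
have below : nonneg_comb D setT (- (theta_l *m w - theta)).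
  rewrite opprB; apply: theta_max; apply: weyl_stable RS Ww _.
  exact: irr_component_sub RlC _ thetal_Rl.
have /subr0_eq thetal_w_eq := nonneg_comb_antisym Dfree above below.
by rewrite thetal_w_eq eqxx in thetal_w.
Qed.
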